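(* Let $F,G:\mathcal{C}\to\mathcal{D}$ be lax monoidal functors between monoidal categories. There are canonical isomorphisms of categories $\mathcal{Z}^w_l(F,\mathcal{D},G)\cong\mathrm{Colax}(Del(F),Del(G))$, $\mathcal{Z}^s_l(F,\mathcal{D},G)\cong\mathrm{Pseudo}(Del(F),Del(G))$, $\mathcal{Z}^w_r(F,\mathcal{D},G)\cong\mathrm{Lax}(Del(F),Del(G))$ and $\mathcal{Z}^s_r(F,\mathcal{D},G)\cong\mathrm{Pseudo}(Del(F),Del(G))$.
   Context: $Del(\mathcal{C})$ is the one-object bicategory with hom-category $\mathcal{C}$ and horizontal composition the tensor product, with composite $g\circ f$ corresponding to $g\otimes f$; $Del(F)$ is the induced lax functor. $\mathcal{D}$ is a $(\mathcal{D},\mathcal{D})$-bimodule category via $\otimes$. $\mathcal{Z}^w_l(F,\mathcal{D},G)$: objects $(M,\sigma)$ with $\sigma_X:M\otimes F(X)\to G(X)\otimes M$ natural, $(G^2_{Y,X}\otimes M)(\mathrm{id}\otimes\sigma_X)(\sigma_Y\otimes\mathrm{id})=\sigma_{Y\otimes X}(M\otimes F^2_{Y,X})$, $\sigma_I(M\otimes F^0)=G^0\otimes M$; morphisms $f$ with $(\mathrm{id}\otimes f)\sigma_X=\tau_X(f\otimes\mathrm{id})$. $\mathcal{Z}^w_r(F,\mathcal{D},G)$: objects $(M,\tilde\sigma)$ with $\tilde\sigma_X:G(X)\otimes M\to M\otimes F(X)$ natural, $(M\otimes F^2_{Y,X})(\tilde\sigma_Y\otimes\mathrm{id})(\mathrm{id}\otimes\tilde\sigma_X)=\tilde\sigma_{Y\otimes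 X}(G^2_{Y,X}\otimes M)$, $\tilde\sigma_I(G^0\otimes M)=M\otimes F^0$; morphisms $f$ with $(f\otimes\mathrm{id})\tilde\sigma_X=\tilde\tau_X(\mathrm{id}\otimes f)$. The superscript $s$ denotes the full subcategories where the half-braidings are invertible. For lax functors $\mathcal{F},\mathcal{G}$ between bicategories, $\mathrm{Colax}(\mathcal{F},\mathcal{G})$ (resp. $\mathrm{Lax}(\mathcal{F},\mathcal{G})$, $\mathrm{Pseudo}(\mathcal{F},\mathcal{G})$) is the category of colax (resp. lax, pseudo) natural transformations and modifications. A colax natural transformation has 2-cells $\chi_f:\chi_B\circ\mathcal{F}(f)\Rightarrow\mathcal{G}(f)\circ\chi_A$ natural in $f$ with $(\mathcal{G}^2_{g,f}\circ 1)\cdot(1\circ\chi_f)\cdot(\chi_g\circ 1)=\chi_{gf}\cdot(1\circ\mathcal{F}^2_{g,f})$ and $\chi_{\mathrm{id}_A}\cdot(1\circ\mathcal{F}^0_A)=\mathcal{G}^0_A\circ 1$; a lax natural transformation has 2-cells $\psi_f:\mathcal{G}(f)\circ\psi_A\Rightarrow\psi_B\circ\mathcal{F}(f)$ with $\psi_{gf}\cdot(\mathcal{G}^2_{g,f}\circ1)=(1\circ\mathcal{F}^2_{g,f})\cdot(\psi_g\circ 1)\cdot(1\circ\psi_f)$ and $\psi_{\mathrm{id}_A}\cdot(\mathcal{G}^0_A\circ1)=1\circ\mathcal{F}^0_A$; pseudonatural means the 2-cells are invertible. A modification $a:\chi\Rrightarrow\chi'$ of colax transformations is a family $a_A:\chi_A\Rightarrow\chi'_A$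 with $(1_{\mathcal{G}(f)}\circ a_A)\cdot\chi_f=\chi'_f\cdot(a_B\circ 1_{\mathcal{F}(f)})$; for lax transformations $(a_B\circ 1)\cdot\psi_f=\psi'_f\cdot(1\circ a_A)$. *)

(* Associators and unitors, suppressed in the
   paper's formulas, are inserted explicitly. *)
From Stdlib Require Import ProofIrrelevance FunctionalExtensionality.

Record Cat : Type := {
  ob :> Type;
  hom : ob -> ob -> Type;
  idm : forall a, hom a a;
  comp : forall a b c, hom b c -> hom a b -> hom a c;
  comp_id_l : forall a b (f : hom a b), comp a b b (idm b) f = f;
  comp_id_r : forall a b (f : hom a b), comp a a b f (idm a) = f;
  comp_assoc : forall a b c d (h : hom c d) (g : hom b c) (f : hom a b),
    comp a c d h (comp a b c g f) = comp a b d (comp b c d h g) f }.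
Arguments hom {_} _ _.
Arguments idm {_} _.
Arguments comp {_ _ _ _} _ _.
Notation "g ∘ f" := (comp g f) (at level 40, left associativity).

Definition is_iso {C : Cat} {a b : C} (f : hom a b) : Prop :=
  exists g : hom b a, g ∘ f = idm a /\ f ∘ g = idm b.

Record Functor (C D : Cat) : Type := {
  fob :> C -> D;
  fmap : forall a b : C, hom a b -> hom (fob a) (fob b);
  fmap_id : forall a, fmap a a (idm a) = idm (fob a);
  fmap_comp : forall a b c (g : hom b c) (f : hom a b),
    fmap a c (g ∘ f) = fmap b c g ∘ fmap a b f }.
Arguments fob {C D} _ _.
Arguments fmap {C D} _ {a b} _.

Definition hcast {C : Cat} {a b a' b' : C} (ea : a = a') (eb : b = b')
  (f : hom a b) : hom a' b' :=
  match ea in _ = x, eb in _ = y return hom x y with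
  | eq_refl, eq_refl => f end.

Definition CatIso (C D : Cat) : Prop :=
  exists (P : Functor C D) (Q : Functor D C)
    (e1 : forall a : C, Q (P a) = a) (e2 : forall b : D, P (Q b) = b),
    (forall (a a' : C) (f : hom a a'),
        hcast (e1 a) (e1 a') (fmap Q (fmap P f)) = f) /\
    (forall (b b' : D) (g : hom b b'),
        hcast (e2 b) (e2 b') (fmap P (fmap Q g)) = g).

Definition FullSub (C : Cat) (P : C -> Prop) : Cat.
Proof.
  refine {| ob := {x : C | P x};
            hom := fun a b => hom (proj1_sig a) (proj1_sig b);
            idm := fun a => idm (proj1_sig a);
            comp := fun a b c g f => g ∘ f |}.
  - intros; apply comp_id_l.
  - intros; apply comp_id_r.
  - intros; apply comp_assoc.
Defined.

Lemma sig_eq {T : Type} {P : T -> Prop} (x y : sig P) :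
  proj1_sig x = proj1_sig y -> x = y.
Proof.
  destruct x as [x px], y as [y py]; simpl; intros e; subst y.
  f_equal; apply proof_irrelevance.
Qed.

Record MonCat : Type := {
  mcat :> Cat;
  tens : mcat -> mcat -> mcat;
  tensm : forall a b c d : mcat, hom a b -> hom c d -> hom (tens a c) (tens b d);
  tensm_id : forall a c : mcat, tensm a a c c (idm a) (idm c) = idm (tens a c);
  tensm_comp : forall (a b e c d k : mcat) (f1 : hom b e) (f0 : hom a b)
      (g1 : hom d k) (g0 : hom c d),
    tensm a e c k (f1 ∘ f0) (g1 ∘ g0) = tensm b e d k f1 g1 ∘ tensm a b c d f0 g0;
  munit : mcat;
  asc : forall x y z : mcat, hom (tens (tens x y) z) (tens x (tens y z));
  asc_inv : forall x y z : mcat, hom (tens x (tens y z)) (tens (tens x y) z);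
  asc_inv_l : forall x y z, asc_inv x y z ∘ asc x y z = idm _;
  asc_inv_r : forall x y z, asc x y z ∘ asc_inv x y z = idm _;
  asc_nat : forall x x' y y' z z' (f : hom x x') (g : hom y y') (h : hom z z'),
    asc x' y' z' ∘ tensm _ _ _ _ (tensm _ _ _ _ f g) h
    = tensm _ _ _ _ f (tensm _ _ _ _ g h) ∘ asc x y z;
  lu : forall x : mcat, hom (tens munit x) x;
  lu_inv : forall x : mcat, hom x (tens munit x);
  lu_inv_l : forall x, lu_inv x ∘ lu x = idm _;
  lu_inv_r : forall x, lu x ∘ lu_inv x = idm _;
  lu_nat : forall x y (f : hom x y), lu y ∘ tensm _ _ _ _ (idm munit) f = f ∘ lu x;
  ru : forall x : mcat, hom (tens x munit) x;
  ru_inv : forall x : mcat, hom x (tens x munit);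
  ru_inv_l : forall x, ru_inv x ∘ ru x = idm _;
  ru_inv_r : forall x, ru x ∘ ru_inv x = idm _;
  ru_nat : forall x y (f : hom x y), ru y ∘ tensm _ _ _ _ f (idm munit) = f ∘ ru x;
  pentagon : forall w x y z,
    asc w x (tens y z) ∘ asc (tens w x) y z
    = tensm _ _ _ _ (idm w) (asc x y z) ∘ asc w (tens x y) z
      ∘ tensm _ _ _ _ (asc w x y) (idm z);
  triangle : forall x y,
    tensm _ _ _ _ (idm x) (lu y) ∘ asc x munit y = tensm _ _ _ _ (ru x) (idm y) }.
Arguments tens {_} _ _.
Arguments tensm {_ _ _ _ _} _ _.
Arguments munit {_}.
Arguments asc {_} _ _ _.
Arguments asc_inv {_} _ _ _.
Arguments lu {_} _.
Arguments lu_inv {_} _.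
Arguments ru {_} _.
Arguments ru_inv {_} _.

Record LaxMonFun (C D : MonCat) : Type := {
  lmf :> Functor C D;
  lm2 : forall x y : C, hom (tens (lmf x) (lmf y)) (lmf (tens x y));
  lm0 : hom (@munit D) (lmf (@munit C));
  lm2_nat : forall (x x' y y' : C) (f : hom x x') (g : hom y y'),
    lm2 x' y' ∘ tensm (fmap lmf f) (fmap lmf g) = fmap lmf (tensm f g) ∘ lm2 x y;
  lm_assoc : forall x y z : C,
    fmap lmf (asc x y z) ∘ lm2 (tens x y) z ∘ tensm (lm2 x y) (idm (lmf z))
    = lm2 x (tens y z) ∘ tensm (idm (lmf x)) (lm2 y z) ∘ asc (lmf x) (lmf y) (lmf z);
  lm_lunit : forall x : C,
    fmap lmf (lu x) ∘ lm2 munit x ∘ tensm lm0 (idm (lmf x)) = lu (lmf x);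
  lm_runit : forall x : C,
    fmap lmf (ru x) ∘ lm2 x munit ∘ tensm (idm (lmf x)) lm0 = ru (lmf x) }.
Arguments lmf {C D} _.
Arguments lm2 {C D} _ _ _.
Arguments lm0 {C D} _.

Record Bicat : Type := {
  bob : Type;
  bhom : bob -> bob -> Cat;
  bid : forall A, bhom A A;
  h1 : forall A B C, bhom B C -> bhom A B -> bhom A C;
  h2 : forall A B C (g g' : bhom B C) (f f' : bhom A B),
    hom g g' -> hom f f' -> hom (h1 A B C g f) (h1 A B C g' f');
  h2_id : forall A B C (g : bhom B C) (f : bhom A B),
    h2 A B C g g f f (idm g) (idm f) = idm (h1 A B C g f);
  h2_comp : forall A B C (g g' g'' : bhom B C) (f f' f'' : bhom A B)
      (b1 : hom g' g'') (b0 : hom g g') (a1 : hom f' f'') (a0 : hom f f'),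
    h2 A B C g g'' f f'' (b1 ∘ b0) (a1 ∘ a0)
    = h2 A B C g' g'' f' f'' b1 a1 ∘ h2 A B C g g' f f' b0 a0;
  bas : forall A B C D (h : bhom C D) (g : bhom B C) (f : bhom A B),
    hom (h1 A B D (h1 B C D h g) f) (h1 A C D h (h1 A B C g f));
  bas_inv : forall A B C D (h : bhom C D) (g : bhom B C) (f : bhom A B),
    hom (h1 A C D h (h1 A B C g f)) (h1 A B D (h1 B C D h g) f);
  bas_inv_l : forall A B C D h g f, bas_inv A B C D h g f ∘ bas A B C D h g f = idm _;
  bas_inv_r : forall A B C D h g f, bas A B C D h g f ∘ bas_inv A B C D h g f = idm _;
  bas_nat : forall A B C D (h h' : bhom C D) (g g' : bhom B C) (f f' : bhom A B)
      (c : hom h h') (b : hom g g') (a : hom f f'),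
    bas A B C D h' g' f' ∘ h2 _ _ _ _ _ _ _ (h2 _ _ _ _ _ _ _ c b) a
    = h2 _ _ _ _ _ _ _ c (h2 _ _ _ _ _ _ _ b a) ∘ bas A B C D h g f;
  blu : forall A B (f : bhom A B), hom (h1 A B B (bid B) f) f;
  blu_inv : forall A B (f : bhom A B), hom f (h1 A B B (bid B) f);
  blu_inv_l : forall A B f, blu_inv A B f ∘ blu A B f = idm _;
  blu_inv_r : forall A B f, blu A B f ∘ blu_inv A B f = idm _;
  blu_nat : forall A B (f f' : bhom A B) (a : hom f f'),
    blu A B f' ∘ h2 _ _ _ _ _ _ _ (idm (bid B)) a = a ∘ blu A B f;
  bru : forall A B (f : bhom A B), hom (h1 A A B f (bid A)) f;
  bru_inv : forall A B (f : bhom A B), hom f (h1 A A B f (bid A));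
  bru_inv_l : forall A B f, bru_inv A B f ∘ bru A B f = idm _;
  bru_inv_r : forall A B f, bru A B f ∘ bru_inv A B f = idm _;
  bru_nat : forall A B (f f' : bhom A B) (a : hom f f'),
    bru A B f' ∘ h2 _ _ _ _ _ _ _ a (idm (bid A)) = a ∘ bru A B f;
  bpent : forall A B C D E (k : bhom D E) (h : bhom C D) (g : bhom B C) (f : bhom A B),
    bas _ _ _ _ k h (h1 _ _ _ g f) ∘ bas _ _ _ _ (h1 _ _ _ k h) g f
    = h2 _ _ _ _ _ _ _ (idm k) (bas _ _ _ _ h g f) ∘ bas _ _ _ _ k (h1 _ _ _ h g) f
      ∘ h2 _ _ _ _ _ _ _ (bas _ _ _ _ k h g) (idm f);
  btri : forall A B C (g : bhom B C) (f : bhom A B),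
    h2 _ _ _ _ _ _ _ (idm g) (blu _ _ f) ∘ bas _ _ _ _ g (bid B) f
    = h2 _ _ _ _ _ _ _ (bru _ _ g) (idm f) }.
Arguments bhom {_} _ _.
Arguments bid {_} _.
Arguments h1 {_ _ _ _} _ _.
Arguments h2 {_ _ _ _ _ _ _ _} _ _.
Arguments bas {_ _ _ _ _} _ _ _.
Arguments bas_inv {_ _ _ _ _} _ _ _.
Arguments blu {_ _ _} _.
Arguments blu_inv {_ _ _} _.
Arguments bru {_ _ _} _.
Arguments bru_inv {_ _ _} _.

Record LaxFun (B B' : Bicat) : Type := {
  lfo : bob B -> bob B';
  lfm : forall A A' : bob B, Functor (bhom A A') (bhom (lfo A) (lfo A'));
  lf2 : forall (A A' A'' : bob B) (g : bhom A' A'') (f : bhom A A'),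
    hom (h1 (lfm _ _ g) (lfm _ _ f)) (lfm _ _ (h1 g f));
  lf0 : forall A : bob B, hom (bid (lfo A)) (lfm A A (bid A));
  lf2_nat : forall (A A' A'' : bob B) (g g' : bhom A' A'') (f f' : bhom A A')
      (b : hom g g') (a : hom f f'),
    lf2 _ _ _ g' f' ∘ h2 (fmap (lfm _ _) b) (fmap (lfm _ _) a)
    = fmap (lfm _ _) (h2 b a) ∘ lf2 _ _ _ g f;
  lf_assoc : forall (A A' A'' A''' : bob B) (h : bhom A'' A''') (g : bhom A' A'')
      (f : bhom A A'),
    fmap (lfm _ _) (bas h g f) ∘ lf2 _ _ _ (h1 h g) f
      ∘ h2 (lf2 _ _ _ h g) (idm (lfm _ _ f))
    = lf2 _ _ _ h (h1 g f) ∘ h2 (idm (lfm _ _ h)) (lf2 _ _ _ g f)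
      ∘ bas (lfm _ _ h) (lfm _ _ g) (lfm _ _ f);
  lf_lunit : forall (A A' : bob B) (f : bhom A A'),
    fmap (lfm _ _) (blu f) ∘ lf2 _ _ _ (bid A') f ∘ h2 (lf0 A') (idm (lfm _ _ f))
    = blu (lfm _ _ f);
  lf_runit : forall (A A' : bob B) (f : bhom A A'),
    fmap (lfm _ _) (bru f) ∘ lf2 _ _ _ f (bid A) ∘ h2 (idm (lfm _ _ f)) (lf0 A)
    = bru (lfm _ _ f) }.
Arguments lfo {B B'} _ _.
Arguments lfm {B B'} _ {A A'}.
Arguments lf2 {B B'} _ {A A' A''} _ _.
Arguments lf0 {B B'} _ _.

Definition Del (C : MonCat) : Bicat.
Proof.
  refine {| bob := unit;
            bhom := fun _ _ => mcat C;
            bid := fun _ => @munit C;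
            h1 := fun _ _ _ g f => tens g f;
            h2 := fun _ _ _ g g' f f' b a => tensm b a;
            bas := fun _ _ _ _ h g f => asc h g f;
            bas_inv := fun _ _ _ _ h g f => asc_inv h g f;
            blu := fun _ _ f => lu f;
            blu_inv := fun _ _ f => lu_inv f;
            bru := fun _ _ f => ru f;
            bru_inv := fun _ _ f => ru_inv f |}.
  all: intros; simpl.
  - apply tensm_id.
  - apply tensm_comp.
  - apply asc_inv_l.
  - apply asc_inv_r.
  - apply asc_nat.
  - apply lu_inv_l.
  - apply lu_inv_r.
  - apply lu_nat.
  - apply ru_inv_l.
  - apply ru_inv_r.
  - apply ru_nat.
  - apply pentagon.
  - apply triangle.
Defined.

Definition DelF {C D : MonCat} (F : LaxMonFun C D) : LaxFun (Del C) (Del D).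
Proof.
  refine (@Build_LaxFun (Del C) (Del D) (fun _ => tt) (fun _ _ => lmf F)
            (fun _ _ _ g f => lm2 F g f) (fun _ => lm0 F) _ _ _ _).
  all: intros; simpl.
  - apply lm2_nat.
  - apply lm_assoc.
  - apply lm_lunit.
  - apply lm_runit.
Defined.

Section Transformations.
Context {B B' : Bicat} (F G : LaxFun B B').

Record ColaxT : Type := {
  cx : forall A, bhom (lfo F A) (lfo G A);
  cxf : forall (A A' : bob B) (f : bhom A A'),
    hom (h1 (cx A') (lfm F f)) (h1 (lfm G f) (cx A));
  cxf_nat : forall (A A' : bob B) (f f' : bhom A A') (a : hom f f'),
    cxf _ _ f' ∘ h2 (idm (cx A')) (fmap (lfm F) a)
    = h2 (fmap (lfm G) a) (idm (cx A)) ∘ cxf _ _ f;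
  cx_comp : forall (A A' A'' : bob B) (g : bhom A' A'') (f : bhom A A'),
    h2 (lf2 G g f) (idm (cx A)) ∘ bas_inv (lfm G g) (lfm G f) (cx A)
      ∘ h2 (idm (lfm G g)) (cxf _ _ f) ∘ bas (lfm G g) (cx A') (lfm F f)
      ∘ h2 (cxf _ _ g) (idm (lfm F f))
    = cxf _ _ (h1 g f) ∘ h2 (idm (cx A'')) (lf2 F g f)
      ∘ bas (cx A'') (lfm F g) (lfm F f);
  cx_id : forall A : bob B,
    cxf _ _ (bid A) ∘ h2 (idm (cx A)) (lf0 F A) ∘ bru_inv (cx A)
    = h2 (lf0 G A) (idm (cx A)) ∘ blu_inv (cx A) }.

Definition CMod (x y : ColaxT) : Type :=
  { a : forall A, hom (cx x A) (cx y A) |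
    forall (A A' : bob B) (f : bhom A A'),
      h2 (idm (lfm G f)) (a A) ∘ cxf x _ _ f = cxf y _ _ f ∘ h2 (a A') (idm (lfm F f)) }.

Record LaxT : Type := {
  lx : forall A, bhom (lfo F A) (lfo G A);
  lxf : forall (A A' : bob B) (f : bhom A A'),
    hom (h1 (lfm G f) (lx A)) (h1 (lx A') (lfm F f));
  lxf_nat : forall (A A' : bob B) (f f' : bhom A A') (a : hom f f'),
    lxf _ _ f' ∘ h2 (fmap (lfm G) a) (idm (lx A))
    = h2 (idm (lx A')) (fmap (lfm F) a) ∘ lxf _ _ f;
  lx_comp : forall (A A' A'' : bob B) (g : bhom A' A'') (f : bhom A A'),
    lxf _ _ (h1 g f) ∘ h2 (lf2 G g f) (idm (lx A))
    = h2 (idm (lx A'')) (lf2 F g f) ∘ bas (lx A'') (lfm F g) (lfm F f)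
      ∘ h2 (lxf _ _ g) (idm (lfm F f)) ∘ bas_inv (lfm G g) (lx A') (lfm F f)
      ∘ h2 (idm (lfm G g)) (lxf _ _ f) ∘ bas (lfm G g) (lfm G f) (lx A);
  lx_id : forall A : bob B,
    lxf _ _ (bid A) ∘ h2 (lf0 G A) (idm (lx A)) ∘ blu_inv (lx A)
    = h2 (idm (lx A)) (lf0 F A) ∘ bru_inv (lx A) }.

Definition LMod (x y : LaxT) : Type :=
  { a : forall A, hom (lx x A) (lx y A) |
    forall (A A' : bob B) (f : bhom A A'),
      h2 (a A') (idm (lfm F f)) ∘ lxf x _ _ f = lxf y _ _ f ∘ h2 (idm (lfm G f)) (a A) }.

End Transformations.

Lemma sigfun_eq {I : Type} {T : I -> Type} {P : (forall i, T i) -> Prop}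
  (x y : sig P) : (forall i, proj1_sig x i = proj1_sig y i) -> x = y.
Proof.
  intros H; apply sig_eq; apply functional_extensionality_dep; exact H.
Qed.

Lemma h2_idid {B : Bicat} {A A' A'' : bob B} (g : bhom A' A'') (f : bhom A A') :
  h2 (idm g) (idm f) = idm (h1 g f).
Proof. apply h2_id. Qed.

Definition ColaxCat {B B' : Bicat} (F G : LaxFun B B') : Cat.
Proof.
  unshelve refine {| ob := ColaxT F G; hom := CMod F G |}.
  - intros x. exists (fun A => idm (cx F G x A)).
    intros A A' f. rewrite !h2_idid, comp_id_l, comp_id_r. reflexivity.
  - intros x y z b a. exists (fun A => proj1_sig b A ∘ proj1_sig a A).
    intros A A' f.
    rewrite <- (comp_id_l _ _ _ (idm (lfm G f))), h2_comp, <- comp_assoc,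
      (proj2_sig a), comp_assoc, (proj2_sig b), <- comp_assoc, <- h2_comp,
      comp_id_l. reflexivity.
  - intros; apply sigfun_eq; intros; simpl; apply comp_id_l.
  - intros; apply sigfun_eq; intros; simpl; apply comp_id_r.
  - intros; apply sigfun_eq; intros; simpl; apply comp_assoc.
Defined.

Definition LaxCat {B B' : Bicat} (F G : LaxFun B B') : Cat.
Proof.
  unshelve refine {| ob := LaxT F G; hom := LMod F G |}.
  - intros x. exists (fun A => idm (lx F G x A)).
    intros A A' f. rewrite !h2_idid, comp_id_l, comp_id_r. reflexivity.
  - intros x y z b a. exists (fun A => proj1_sig b A ∘ proj1_sig a A).
    intros A A' f.
    rewrite <- (comp_id_l _ _ _ (idm (lfm F f))), h2_comp, <- comp_assoc,
      (proj2_sig a), comp_assoc, (proj2_sig b), <- comp_assoc, <- h2_comp,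
      comp_id_l. reflexivity.
  - intros; apply sigfun_eq; intros; simpl; apply comp_id_l.
  - intros; apply sigfun_eq; intros; simpl; apply comp_id_r.
  - intros; apply sigfun_eq; intros; simpl; apply comp_assoc.
Defined.

Definition PseudoCat {B B' : Bicat} (F G : LaxFun B B') : Cat :=
  FullSub (ColaxCat F G)
    (fun x => forall (A A' : bob B) (f : bhom A A'), is_iso (cxf F G x _ _ f)).

Section Centralizers.
Context {C D : MonCat} (F G : LaxMonFun C D).

Record ZlObj : Type := {
  zlm : D;
  zls : forall X : C, hom (tens zlm (F X)) (tens (G X) zlm);
  zls_nat : forall (X Y : C) (f : hom X Y),
    zls Y ∘ tensm (idm zlm) (fmap F f) = tensm (fmap G f) (idm zlm) ∘ zls X;
  zls_comp : forall X Y : C,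
    tensm (lm2 G Y X) (idm zlm) ∘ asc_inv (G Y) (G X) zlm
      ∘ tensm (idm (G Y)) (zls X) ∘ asc (G Y) zlm (F X)
      ∘ tensm (zls Y) (idm (F X))
    = zls (tens Y X) ∘ tensm (idm zlm) (lm2 F Y X) ∘ asc zlm (F Y) (F X);
  zls_unit :
    zls munit ∘ tensm (idm zlm) (lm0 F) ∘ ru_inv zlm
    = tensm (lm0 G) (idm zlm) ∘ lu_inv zlm }.

Definition ZlHom (x y : ZlObj) : Type :=
  { f : hom (zlm x) (zlm y) |
    forall X : C, tensm (idm (G X)) f ∘ zls x X = zls y X ∘ tensm f (idm (F X)) }.

Record ZrObj : Type := {
  zrm : D;
  zrs : forall X : C, hom (tens (G X) zrm) (tens zrm (F X));
  zrs_nat : forall (X Y : C) (f : hom X Y),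
    zrs Y ∘ tensm (fmap G f) (idm zrm) = tensm (idm zrm) (fmap F f) ∘ zrs X;
  zrs_comp : forall X Y : C,
    tensm (idm zrm) (lm2 F Y X) ∘ asc zrm (F Y) (F X)
      ∘ tensm (zrs Y) (idm (F X)) ∘ asc_inv (G Y) zrm (F X)
      ∘ tensm (idm (G Y)) (zrs X) ∘ asc (G Y) (G X) zrm
    = zrs (tens Y X) ∘ tensm (lm2 G Y X) (idm zrm);
  zrs_unit :
    zrs munit ∘ tensm (lm0 G) (idm zrm) ∘ lu_inv zrm
    = tensm (idm zrm) (lm0 F) ∘ ru_inv zrm }.

Definition ZrHom (x y : ZrObj) : Type :=
  { f : hom (zrm x) (zrm y) |
    forall X : C, tensm f (idm (F X)) ∘ zrs x X = zrs y X ∘ tensm (idm (G X)) f }.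

End Centralizers.

Definition ZlCat {C D : MonCat} (F G : LaxMonFun C D) : Cat.
Proof.
  unshelve refine {| ob := ZlObj F G; hom := ZlHom F G |}.
  - intros x. exists (idm (zlm F G x)).
    intros X. rewrite !tensm_id, comp_id_l, comp_id_r. reflexivity.
  - intros x y z b a. exists (proj1_sig b ∘ proj1_sig a).
    intros X.
    rewrite <- (comp_id_l _ _ _ (idm (G X))), tensm_comp, <- comp_assoc,
      (proj2_sig a), comp_assoc, (proj2_sig b), <- comp_assoc, <- tensm_comp,
      comp_id_l. reflexivity.
  - intros; apply sig_eq; simpl; apply comp_id_l.
  - intros; apply sig_eq; simpl; apply comp_id_r.
  - intros; apply sig_eq; simpl; apply comp_assoc.
Defined.

Definition ZrCat {C D : MonCat} (F G : LaxMonFun C D) : Cat.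
Proof.
  unshelve refine {| ob := ZrObj F G; hom := ZrHom F G |}.
  - intros x. exists (idm (zrm F G x)).
    intros X. rewrite !tensm_id, comp_id_l, comp_id_r. reflexivity.
  - intros x y z b a. exists (proj1_sig b ∘ proj1_sig a).
    intros X.
    rewrite <- (comp_id_l _ _ _ (idm (F X))), tensm_comp, <- comp_assoc,
      (proj2_sig a), comp_assoc, (proj2_sig b), <- comp_assoc, <- tensm_comp,
      comp_id_l. reflexivity.
  - intros; apply sig_eq; simpl; apply comp_id_l.
  - intros; apply sig_eq; simpl; apply comp_id_r.
  - intros; apply sig_eq; simpl; apply comp_assoc.
Defined.

Definition ZlsCat {C D : MonCat} (F G : LaxMonFun C D) : Cat :=
  FullSub (ZlCat F G) (fun x => forall X : C, is_iso (zls F G x X)).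

Definition ZrsCat {C D : MonCat} (F G : LaxMonFun C D) : Cat :=
  FullSub (ZrCat F G) (fun x => forall X : C, is_iso (zrs F G x X)).

From Stdlib Require Import ProofIrrelevance FunctionalExtensionality IndefiniteDescription.

(* Del(C) has a single object, so a colax transformation Del(F) => Del(G) is one
   1-cell M of Del(D) with 2-cells chi_X : M ⊗ F X -> G X ⊗ M natural in X, and its
   coherence axioms for composition and identities are word for word the half-braiding
   axioms of Z^w_l(F,D,G); modifications are the morphisms of Z^w_l.  Lax
   transformations correspond in the same way to Z^w_r, and pseudonaturality to
   invertibility of the half-braiding.  Finally Z^s_r ≅ Z^s_l by inverting the
   half-braiding: its axioms are equations between composites of isomorphisms, and
   inverting both sides of such an equation gives the axioms of the other side. *)

Lemma hcast_self {C : Cat} {a b : C} (ea : a = a) (eb : b = b) (f : hom a b) :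
  hcast ea eb f = f.
Proof.
  rewrite (proof_irrelevance _ ea eq_refl), (proof_irrelevance _ eb eq_refl).
  reflexivity.
Qed.

Lemma hcast_trans {C : Cat} {a b c a' b' c' : C} (e1 : a = b) (e2 : b = c)
  (f1 : a' = b') (f2 : b' = c') (g : hom a a') :
  hcast (eq_trans e1 e2) (eq_trans f1 f2) g = hcast e2 f2 (hcast e1 f1 g).
Proof. destruct e2, f2, e1, f1; reflexivity. Qed.

Lemma hcast_fmap {C D : Cat} (U : Functor C D) {a b a' b' : C} (e : a = b) (e' : a' = b')
  (g : hom a a') :
  fmap U (hcast e e' g) = hcast (f_equal (fob U) e) (f_equal (fob U) e') (fmap U g).
Proof. destruct e, e'; reflexivity. Qed.

Definition functor_compose {A B C : Cat} (G : Functor B C) (F : Functor A B) :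
  Functor A C.
Proof.
  refine {| fob := fun x => G (F x); fmap := fun x y f => fmap G (fmap F f) |}.
  - intros; rewrite !fmap_id; reflexivity.
  - intros; rewrite !fmap_comp; reflexivity.
Defined.

Definition faithful {C D : Cat} (U : Functor C D) : Prop :=
  forall (a b : C) (f g : hom a b), fmap U f = fmap U g -> f = g.

Lemma faithful_compose {A B C : Cat} (G : Functor B C) (F : Functor A B) :
  faithful G -> faithful F -> faithful (functor_compose G F).
Proof. intros HG HF a b f g E; apply HF, HG, E. Qed.

Lemma CatIso_trans {A B C : Cat} : CatIso A B -> CatIso B C -> CatIso A C.
Proof.
  intros (P1 & Q1 & e1 & e2 & H1 & H2) (P2 & Q2 & e1' & e2' & H1' & H2').
  exists (functor_compose P2 P1), (functor_compose Q1 Q2).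
  exists (fun a => eq_trans (f_equal (fob Q1) (e1' (P1 a))) (e1 a)).
  exists (fun c => eq_trans (f_equal (fob P2) (e2 (Q2 c))) (e2' c)).
  split.
  - intros a a' f; simpl. rewrite hcast_trans, <- hcast_fmap, H1'. apply H1.
  - intros c c' g; simpl. rewrite hcast_trans, <- hcast_fmap, H2. apply H2'.
Qed.

(* The transport condition of [CatIso] may be checked in the base B; when P and Q
   commute definitionally with the forgetful functors it is an instance of
   [hcast_self]. *)
Lemma CatIso_of_faithful {X Y B : Cat} (UX : Functor X B) (UY : Functor Y B)
  (P : Functor X Y) (Q : Functor Y X)
  (e1 : forall a : X, Q (P a) = a) (e2 : forall b : Y, P (Q b) = b) :
  faithful UX -> faithful UY ->
  (forall (a a' : X) (f : hom a a'),
      hcast (f_equal (fob UX) (e1 a)) (f_equal (fob UX) (e1 a'))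
        (fmap UX (fmap Q (fmap P f))) = fmap UX f) ->
  (forall (b b' : Y) (g : hom b b'),
      hcast (f_equal (fob UY) (e2 b)) (f_equal (fob UY) (e2 b'))
        (fmap UY (fmap P (fmap Q g))) = fmap UY g) ->
  CatIso X Y.
Proof.
  intros HX HY H1 H2.
  exists P, Q, e1, e2; split.
  - intros a a' f; apply HX; rewrite hcast_fmap; apply H1.
  - intros b b' g; apply HY; rewrite hcast_fmap; apply H2.
Qed.

Definition FullSub_incl (C : Cat) (P : C -> Prop) : Functor (FullSub C P) C.
Proof.
  refine (@Build_Functor (FullSub C P) C (fun x => proj1_sig x) (fun x y f => f) _ _);
    reflexivity.
Defined.

Lemma FullSub_incl_faithful (C : Cat) (P : C -> Prop) : faithful (FullSub_incl C P).
Proof. intros a b f g E; exact E. Qed.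

Definition FullSub_lift {C D : Cat} {PC : C -> Prop} {PD : D -> Prop}
  (o : forall a, PC a -> D) (ho : forall a p, PD (o a p))
  (m : forall a b (pa : PC a) (pb : PC b), hom a b -> hom (o a pa) (o b pb))
  (m_id : forall a pa, m a a pa pa (idm a) = idm (o a pa))
  (m_comp : forall a b c pa pb pc (g : hom b c) (f : hom a b),
      m a c pa pc (g ∘ f) = m b c pb pc g ∘ m a b pa pb f) :
  Functor (FullSub C PC) (FullSub D PD).
Proof.
  refine (@Build_Functor (FullSub C PC) (FullSub D PD)
            (fun x => exist PD (o _ (proj2_sig x)) (ho _ (proj2_sig x)))
            (fun x y f => m _ _ (proj2_sig x) (proj2_sig y) f) _ _).
  - intros x; exact (m_id _ (proj2_sig x)).
  - intros x y z g f; exact (m_comp _ _ _ _ _ _ g f).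
Defined.

Definition FullSub_restrict {C D : Cat} {PC : C -> Prop} {PD : D -> Prop}
  (H : Functor C D) (hH : forall a, PC a -> PD (H a)) :
  Functor (FullSub C PC) (FullSub D PD) :=
  FullSub_lift (fun a _ => H a) hH (fun a b _ _ f => fmap H f)
    (fun a _ => fmap_id _ _ H a) (fun a b c _ _ _ g f => fmap_comp _ _ H a b c g f).

Definition inverse_pair {C : Cat} {a b : C} (s : hom a b) (s' : hom b a) : Prop :=
  s' ∘ s = idm a /\ s ∘ s' = idm b.

Lemma inverse_pair_sym {C : Cat} {a b : C} (s : hom a b) (s' : hom b a) :
  inverse_pair s s' -> inverse_pair s' s.
Proof. intros [H1 H2]; split; assumption. Qed.

Lemma inverse_pair_idm {C : Cat} (a : C) : inverse_pair (idm a) (idm a).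
Proof. split; apply comp_id_l. Qed.

Lemma inverse_pair_comp {C : Cat} {a b c : C} (s : hom a b) s' (t : hom b c) t' :
  inverse_pair s s' -> inverse_pair t t' -> inverse_pair (t ∘ s) (s' ∘ t').
Proof.
  intros [H1 H2] [K1 K2]; split.
  - rewrite comp_assoc, <- (comp_assoc _ _ _ _ _ s'), K1, comp_id_r, H1; reflexivity.
  - rewrite comp_assoc, <- (comp_assoc _ _ _ _ _ t), H2, comp_id_r, K2; reflexivity.
Qed.

Lemma inverse_pair_uniq {C : Cat} {a b : C} (s : hom a b) s1 s2 :
  inverse_pair s s1 -> inverse_pair s s2 -> s1 = s2.
Proof.
  intros [H1 H2] [K1 K2].
  rewrite <- (comp_id_r _ _ _ s1), <- K2, comp_assoc, H1, comp_id_l; reflexivity.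
Qed.

Lemma inverse_pair_conj {C : Cat} {w x y z : C} {s : hom w x} {t : hom z y} {s' t'}
  (a : hom x y) (b : hom w z) :
  inverse_pair s s' -> inverse_pair t t' -> a ∘ s = t ∘ b -> t' ∘ a = b ∘ s'.
Proof.
  intros [H1 H2] [K1 K2] E.
  rewrite <- (comp_id_r _ _ _ (t' ∘ a)), <- H2, comp_assoc,
    <- (comp_assoc _ _ _ _ _ t'), E, comp_assoc, K1, comp_id_l.
  reflexivity.
Qed.

Lemma inverse_pair_tensm {D : MonCat} {a b c d : D} (f : hom a b) f' (g : hom c d) g' :
  inverse_pair f f' -> inverse_pair g g' -> inverse_pair (tensm f g) (tensm f' g').
Proof.
  intros [H1 H2] [K1 K2]; split; rewrite <- tensm_comp.
  - rewrite H1, K1; apply tensm_id.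
  - rewrite H2, K2; apply tensm_id.
Qed.

Lemma inverse_pair_asc {D : MonCat} (x y z : D) : inverse_pair (asc x y z) (asc_inv x y z).
Proof. split; [apply asc_inv_l | apply asc_inv_r]. Qed.

Definition iso_inv {C : Cat} {a b : C} {s : hom a b} (p : is_iso s) : hom b a :=
  proj1_sig (constructive_indefinite_description _ p).

Lemma iso_inv_pair {C : Cat} {a b : C} {s : hom a b} (p : is_iso s) :
  inverse_pair s (iso_inv p).
Proof. exact (proj2_sig (constructive_indefinite_description _ p)). Qed.

Lemma iso_inv_is_iso {C : Cat} {a b : C} {s : hom a b} (p : is_iso s) : is_iso (iso_inv p).
Proof. exists s; exact (inverse_pair_sym _ _ (iso_inv_pair p)). Qed.

Lemma unit_fun_const {K : Type} (h : unit -> K) : exists k, h = fun _ => k.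
Proof. exists (h tt); apply functional_extensionality; intros []; reflexivity. Qed.

Lemma unit_fun2_const {K : Type} (h : unit -> unit -> K) : exists k, h = fun _ _ => k.
Proof.
  exists (h tt tt); apply functional_extensionality; intros [].
  apply functional_extensionality; intros []; reflexivity.
Qed.

Section Transformations.
Context {B B' : Bicat} (F G : LaxFun B B').

Definition colax_at (A : bob B) :
  Functor (ColaxCat F G) (bhom (lfo F A) (lfo G A)).
Proof.
  refine (@Build_Functor (ColaxCat F G) _ (fun x => cx F G x A)
            (fun x y a => proj1_sig a A) _ _); reflexivity.
Defined.

Definition lax_at (A : bob B) : Functor (LaxCat F G) (bhom (lfo F A) (lfo G A)).
Proof.
  refine (@Build_Functor (LaxCat F G) _ (fun x => lx F G x A)
            (fun x y a => proj1_sig a A) _ _); reflexivity.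
Defined.

Lemma colax_at_faithful (A0 : bob B) :
  (forall A, A = A0) -> faithful (colax_at A0).
Proof. intros HA x y a b E; apply sigfun_eq; intros A; rewrite (HA A); exact E. Qed.

Lemma lax_at_faithful (A0 : bob B) : (forall A, A = A0) -> faithful (lax_at A0).
Proof. intros HA x y a b E; apply sigfun_eq; intros A; rewrite (HA A); exact E. Qed.

Lemma ColaxT_pi cx0 cxf0 n n' c c' i i' :
  Build_ColaxT F G cx0 cxf0 n c i = Build_ColaxT F G cx0 cxf0 n' c' i'.
Proof. f_equal; apply proof_irrelevance. Qed.

Lemma LaxT_pi lx0 lxf0 n n' c c' i i' :
  Build_LaxT F G lx0 lxf0 n c i = Build_LaxT F G lx0 lxf0 n' c' i'.
Proof. f_equal; apply proof_irrelevance. Qed.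

End Transformations.

Section Centralizers.
Context {C D : MonCat} (F G : LaxMonFun C D).

Definition Zl_forget : Functor (ZlCat F G) D.
Proof.
  refine (@Build_Functor (ZlCat F G) D (zlm F G) (fun x y f => proj1_sig f) _ _);
    reflexivity.
Defined.

Definition Zr_forget : Functor (ZrCat F G) D.
Proof.
  refine (@Build_Functor (ZrCat F G) D (zrm F G) (fun x y f => proj1_sig f) _ _);
    reflexivity.
Defined.

Lemma Zl_forget_faithful : faithful Zl_forget.
Proof. intros x y f g E; apply sig_eq, E. Qed.

Lemma Zr_forget_faithful : faithful Zr_forget.
Proof. intros x y f g E; apply sig_eq, E. Qed.

Lemma ZlObj_ext m s s' n n' c c' u u' :
  (forall X, s X = s' X) -> Build_ZlObj F G m s n c u = Build_ZlObj F G m s' n' c' u'.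
Proof.
  intros E; apply functional_extensionality_dep in E; subst s'.
  f_equal; apply proof_irrelevance.
Qed.

Lemma ZrObj_ext m s s' n n' c c' u u' :
  (forall X, s X = s' X) -> Build_ZrObj F G m s n c u = Build_ZrObj F G m s' n' c' u'.
Proof.
  intros E; apply functional_extensionality_dep in E; subst s'.
  f_equal; apply proof_irrelevance.
Qed.

End Centralizers.

Section Delooping.
Context {C D : MonCat} (F G : LaxMonFun C D).

Definition colax_of_Zl (x : ZlObj F G) : ColaxT (DelF F) (DelF G) :=
  @Build_ColaxT _ _ (DelF F) (DelF G) (fun _ => zlm F G x) (fun _ _ => zls F G x)
    (fun _ _ => zls_nat F G x) (fun _ _ _ g f => zls_comp F G x f g)
    (fun _ => zls_unit F G x).

Definition Zl_of_colax (b : ColaxT (DelF F) (DelF G)) : ZlObj F G :=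
  Build_ZlObj F G (cx _ _ b tt) (cxf _ _ b tt tt) (cxf_nat _ _ b tt tt)
    (fun X Y => cx_comp _ _ b tt tt tt Y X) (cx_id _ _ b tt).

Definition lax_of_Zr (x : ZrObj F G) : LaxT (DelF F) (DelF G) :=
  @Build_LaxT _ _ (DelF F) (DelF G) (fun _ => zrm F G x) (fun _ _ => zrs F G x)
    (fun _ _ => zrs_nat F G x) (fun _ _ _ g f => eq_sym (zrs_comp F G x f g))
    (fun _ => zrs_unit F G x).

Definition Zr_of_lax (b : LaxT (DelF F) (DelF G)) : ZrObj F G :=
  Build_ZrObj F G (lx _ _ b tt) (lxf _ _ b tt tt) (lxf_nat _ _ b tt tt)
    (fun X Y => eq_sym (lx_comp _ _ b tt tt tt Y X)) (lx_id _ _ b tt).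

Lemma Zl_of_colax_of_Zl (x : ZlObj F G) : Zl_of_colax (colax_of_Zl x) = x.
Proof. destruct x; reflexivity. Qed.

Lemma Zr_of_lax_of_Zr (x : ZrObj F G) : Zr_of_lax (lax_of_Zr x) = x.
Proof. destruct x; apply ZrObj_ext; reflexivity. Qed.

Lemma colax_of_Zl_of_colax (b : ColaxT (DelF F) (DelF G)) : colax_of_Zl (Zl_of_colax b) = b.
Proof.
  destruct b as [cx0 cxf0 n c i].
  destruct (unit_fun_const cx0) as [M ->].
  destruct (@unit_fun2_const (forall X : C, hom (tens M (F X)) (tens (G X) M)) cxf0)
    as [chi ->].
  apply ColaxT_pi.
Qed.

Lemma lax_of_Zr_of_lax (b : LaxT (DelF F) (DelF G)) : lax_of_Zr (Zr_of_lax b) = b.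
Proof.
  destruct b as [lx0 lxf0 n c i].
  destruct (unit_fun_const lx0) as [M ->].
  destruct (@unit_fun2_const (forall X : C, hom (tens (G X) M) (tens M (F X))) lxf0)
    as [psi ->].
  apply LaxT_pi.
Qed.

Definition colax_of_Zl_hom (x y : ZlObj F G) (f : ZlHom F G x y) :
  CMod (DelF F) (DelF G) (colax_of_Zl x) (colax_of_Zl y).
Proof. exists (fun _ => proj1_sig f); exact (fun _ _ => proj2_sig f). Defined.

Definition Zl_hom_of_colax (b c : ColaxT (DelF F) (DelF G)) (a : CMod _ _ b c) :
  ZlHom F G (Zl_of_colax b) (Zl_of_colax c).
Proof. exists (proj1_sig a tt); exact (proj2_sig a tt tt). Defined.

Definition lax_of_Zr_hom (x y : ZrObj F G) (f : ZrHom F G x y) :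
  LMod (DelF F) (DelF G) (lax_of_Zr x) (lax_of_Zr y).
Proof. exists (fun _ => proj1_sig f); exact (fun _ _ => proj2_sig f). Defined.

Definition Zr_hom_of_lax (b c : LaxT (DelF F) (DelF G)) (a : LMod _ _ b c) :
  ZrHom F G (Zr_of_lax b) (Zr_of_lax c).
Proof. exists (proj1_sig a tt); exact (proj2_sig a tt tt). Defined.

Definition Zl_to_colax : Functor (ZlCat F G) (ColaxCat (DelF F) (DelF G)).
Proof.
  refine (@Build_Functor (ZlCat F G) (ColaxCat (DelF F) (DelF G)) colax_of_Zl
            colax_of_Zl_hom _ _);
    intros; apply sig_eq; reflexivity.
Defined.

Definition colax_to_Zl : Functor (ColaxCat (DelF F) (DelF G)) (ZlCat F G).
Proof.
  refine (@Build_Functor (ColaxCat (DelF F) (DelF G)) (ZlCat F G) Zl_of_colax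
            Zl_hom_of_colax _ _);
    intros; apply sig_eq; reflexivity.
Defined.

Definition Zr_to_lax : Functor (ZrCat F G) (LaxCat (DelF F) (DelF G)).
Proof.
  refine (@Build_Functor (ZrCat F G) (LaxCat (DelF F) (DelF G)) lax_of_Zr
            lax_of_Zr_hom _ _);
    intros; apply sig_eq; reflexivity.
Defined.

Definition lax_to_Zr : Functor (LaxCat (DelF F) (DelF G)) (ZrCat F G).
Proof.
  refine (@Build_Functor (LaxCat (DelF F) (DelF G)) (ZrCat F G) Zr_of_lax
            Zr_hom_of_lax _ _);
    intros; apply sig_eq; reflexivity.
Defined.

Lemma Del_ob_tt (A : bob (Del C)) : A = tt.
Proof. destruct A; reflexivity. Qed.

Lemma Zl_iso_colax : CatIso (ZlCat F G) (ColaxCat (DelF F) (DelF G)).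
Proof.
  apply (CatIso_of_faithful (Zl_forget F G) (colax_at (DelF F) (DelF G) tt)
           Zl_to_colax colax_to_Zl
           Zl_of_colax_of_Zl colax_of_Zl_of_colax).
  - apply Zl_forget_faithful.
  - exact (colax_at_faithful (DelF F) (DelF G) tt Del_ob_tt).
  - intros; apply hcast_self.
  - intros; apply hcast_self.
Qed.

Lemma Zr_iso_lax : CatIso (ZrCat F G) (LaxCat (DelF F) (DelF G)).
Proof.
  apply (CatIso_of_faithful (Zr_forget F G) (lax_at (DelF F) (DelF G) tt)
           Zr_to_lax lax_to_Zr
           Zr_of_lax_of_Zr lax_of_Zr_of_lax).
  - apply Zr_forget_faithful.
  - exact (lax_at_faithful (DelF F) (DelF G) tt Del_ob_tt).
  - intros; apply hcast_self.
  - intros; apply hcast_self.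
Qed.

Definition Zls_to_pseudo : Functor (ZlsCat F G) (PseudoCat (DelF F) (DelF G)).
Proof. refine (FullSub_restrict Zl_to_colax _); intros x p A A' X; exact (p X). Defined.

Definition pseudo_to_Zls : Functor (PseudoCat (DelF F) (DelF G)) (ZlsCat F G).
Proof. refine (FullSub_restrict colax_to_Zl _); intros b p X; exact (p tt tt X). Defined.

Lemma Zls_to_pseudo_to_Zls (a : ZlsCat F G) : pseudo_to_Zls (Zls_to_pseudo a) = a.
Proof. apply sig_eq, Zl_of_colax_of_Zl. Qed.

Lemma pseudo_to_Zls_to_pseudo (b : PseudoCat (DelF F) (DelF G)) :
  Zls_to_pseudo (pseudo_to_Zls b) = b.
Proof. apply sig_eq, colax_of_Zl_of_colax. Qed.

Lemma Zls_iso_pseudo : CatIso (ZlsCat F G) (PseudoCat (DelF F) (DelF G)).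
Proof.
  apply (CatIso_of_faithful
           (functor_compose (Zl_forget F G) (FullSub_incl _ _))
           (functor_compose (colax_at (DelF F) (DelF G) tt) (FullSub_incl _ _))
           Zls_to_pseudo pseudo_to_Zls
           Zls_to_pseudo_to_Zls pseudo_to_Zls_to_pseudo).
  - apply faithful_compose; [apply Zl_forget_faithful | apply FullSub_incl_faithful].
  - apply faithful_compose;
      [exact (colax_at_faithful (DelF F) (DelF G) tt Del_ob_tt) | apply FullSub_incl_faithful].
  - intros; apply hcast_self.
  - intros; apply hcast_self.
Qed.

End Delooping.

Section InvertZr.
Context {C D : MonCat} (F G : LaxMonFun C D) (x : ZrObj F G)
  (sigma : forall X : C, hom (tens (zrm F G x) (F X)) (tens (G X) (zrm F G x)))
  (Hsigma : forall X : C, inverse_pair (zrs F G x X) (sigma X)).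

Local Notation M := (zrm F G x).

Lemma inv_zrs_nat (X Y : C) (f : hom X Y) :
  sigma Y ∘ tensm (idm M) (fmap F f) = tensm (fmap G f) (idm M) ∘ sigma X.
Proof.
  apply (inverse_pair_conj _ _ (Hsigma X) (Hsigma Y)).
  symmetry; apply zrs_nat.
Qed.

Lemma inv_zrs_comp (X Y : C) :
  tensm (lm2 G Y X) (idm M) ∘ asc_inv (G Y) (G X) M ∘ tensm (idm (G Y)) (sigma X)
    ∘ asc (G Y) M (F X) ∘ tensm (sigma Y) (idm (F X))
  = sigma (tens Y X) ∘ tensm (idm M) (lm2 F Y X) ∘ asc M (F Y) (F X).
Proof.
  set (T := tensm (zrs F G x Y) (idm (F X)) ∘ asc_inv (G Y) M (F X)
              ∘ tensm (idm (G Y)) (zrs F G x X) ∘ asc (G Y) (G X) M).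
  set (T' := asc_inv (G Y) (G X) M ∘ (tensm (idm (G Y)) (sigma X)
               ∘ (asc (G Y) M (F X) ∘ tensm (sigma Y) (idm (F X))))).
  assert (HT : inverse_pair T T').
  { repeat apply inverse_pair_comp.
    - apply inverse_pair_asc.
    - apply inverse_pair_tensm; [apply inverse_pair_idm | apply Hsigma].
    - apply inverse_pair_sym, inverse_pair_asc.
    - apply inverse_pair_tensm; [apply Hsigma | apply inverse_pair_idm]. }
  assert (E : (tensm (idm M) (lm2 F Y X) ∘ asc M (F Y) (F X)) ∘ T
              = zrs F G x (tens Y X) ∘ tensm (lm2 G Y X) (idm M)).
  { unfold T; rewrite !comp_assoc; apply zrs_comp. }
  pose proof (inverse_pair_conj _ _ HT (Hsigma (tens Y X)) E) as E'.
  unfold T' in E'; rewrite !comp_assoc in E'; symmetry; exact E'.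
Qed.

Lemma inv_zrs_unit :
  sigma munit ∘ tensm (idm M) (lm0 F) ∘ ru_inv M = tensm (lm0 G) (idm M) ∘ lu_inv M.
Proof.
  rewrite <- (comp_assoc _ _ _ _ _ (sigma munit)), <- (zrs_unit F G x), !comp_assoc,
    (proj1 (Hsigma munit)), comp_id_l.
  reflexivity.
Qed.

Definition Zl_of_Zr : ZlObj F G :=
  Build_ZlObj F G M sigma inv_zrs_nat inv_zrs_comp inv_zrs_unit.

End InvertZr.

Section InvertZl.
Context {C D : MonCat} (F G : LaxMonFun C D) (x : ZlObj F G)
  (tau : forall X : C, hom (tens (G X) (zlm F G x)) (tens (zlm F G x) (F X)))
  (Htau : forall X : C, inverse_pair (zls F G x X) (tau X)).

Local Notation M := (zlm F G x).

Lemma inv_zls_nat (X Y : C) (f : hom X Y) :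
  tau Y ∘ tensm (fmap G f) (idm M) = tensm (idm M) (fmap F f) ∘ tau X.
Proof.
  apply (inverse_pair_conj _ _ (Htau X) (Htau Y)).
  symmetry; apply zls_nat.
Qed.

Lemma inv_zls_comp (X Y : C) :
  tensm (idm M) (lm2 F Y X) ∘ asc M (F Y) (F X) ∘ tensm (tau Y) (idm (F X))
    ∘ asc_inv (G Y) M (F X) ∘ tensm (idm (G Y)) (tau X) ∘ asc (G Y) (G X) M
  = tau (tens Y X) ∘ tensm (lm2 G Y X) (idm M).
Proof.
  set (T := asc_inv (G Y) (G X) M ∘ tensm (idm (G Y)) (zls F G x X)
              ∘ asc (G Y) M (F X) ∘ tensm (zls F G x Y) (idm (F X))).
  set (T' := tensm (tau Y) (idm (F X)) ∘ (asc_inv (G Y) M (F X)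
               ∘ (tensm (idm (G Y)) (tau X) ∘ asc (G Y) (G X) M))).
  assert (HT : inverse_pair T T').
  { repeat apply inverse_pair_comp.
    - apply inverse_pair_tensm; [apply Htau | apply inverse_pair_idm].
    - apply inverse_pair_asc.
    - apply inverse_pair_tensm; [apply inverse_pair_idm | apply Htau].
    - apply inverse_pair_sym, inverse_pair_asc. }
  assert (E : tensm (lm2 G Y X) (idm M) ∘ T
              = zls F G x (tens Y X) ∘ (tensm (idm M) (lm2 F Y X) ∘ asc M (F Y) (F X))).
  { unfold T; rewrite !comp_assoc; apply zls_comp. }
  pose proof (inverse_pair_conj _ _ HT (Htau (tens Y X)) E) as E'.
  unfold T' in E'; rewrite !comp_assoc in E'; symmetry; exact E'.
Qed.

Lemma inv_zls_unit :
  tau munit ∘ tensm (lm0 G) (idm M) ∘ lu_inv M = tensm (idm M) (lm0 F) ∘ ru_inv M.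
Proof.
  rewrite <- (comp_assoc _ _ _ _ _ (tau munit)), <- (zls_unit F G x), !comp_assoc,
    (proj1 (Htau munit)), comp_id_l.
  reflexivity.
Qed.

Definition Zr_of_Zl : ZrObj F G :=
  Build_ZrObj F G M tau inv_zls_nat inv_zls_comp inv_zls_unit.

End InvertZl.

Section StrongCentralizers.
Context {C D : MonCat} (F G : LaxMonFun C D).

Definition Zl_hom_of_Zr_hom (x y : ZrObj F G) sx sy
  (Hx : forall X, inverse_pair (zrs F G x X) (sx X))
  (Hy : forall X, inverse_pair (zrs F G y X) (sy X)) (f : ZrHom F G x y) :
  ZlHom F G (Zl_of_Zr F G x sx Hx) (Zl_of_Zr F G y sy Hy).
Proof.
  exists (proj1_sig f); intros X.
  symmetry; exact (inverse_pair_conj _ _ (Hx X) (Hy X) (proj2_sig f X)).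
Defined.

Definition Zr_hom_of_Zl_hom (x y : ZlObj F G) tx ty
  (Hx : forall X, inverse_pair (zls F G x X) (tx X))
  (Hy : forall X, inverse_pair (zls F G y X) (ty X)) (f : ZlHom F G x y) :
  ZrHom F G (Zr_of_Zl F G x tx Hx) (Zr_of_Zl F G y ty Hy).
Proof.
  exists (proj1_sig f); intros X.
  symmetry; exact (inverse_pair_conj _ _ (Hx X) (Hy X) (proj2_sig f X)).
Defined.

Definition Zrs_to_Zls : Functor (ZrsCat F G) (ZlsCat F G).
Proof.
  refine (@FullSub_lift (ZrCat F G) (ZlCat F G)
            (fun x => forall X, is_iso (zrs F G x X))
            (fun y => forall X, is_iso (zls F G y X))
            (fun x p => Zl_of_Zr F G x _ (fun X => iso_inv_pair (p X)))
            (fun x p X => iso_inv_is_iso (p X))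
            (fun x y px py => Zl_hom_of_Zr_hom x y _ _
                                (fun X => iso_inv_pair (px X)) (fun X => iso_inv_pair (py X)))
            _ _);
    intros; apply sig_eq; reflexivity.
Defined.

Definition Zls_to_Zrs : Functor (ZlsCat F G) (ZrsCat F G).
Proof.
  refine (@FullSub_lift (ZlCat F G) (ZrCat F G)
            (fun x => forall X, is_iso (zls F G x X))
            (fun y => forall X, is_iso (zrs F G y X))
            (fun x p => Zr_of_Zl F G x _ (fun X => iso_inv_pair (p X)))
            (fun x p X => iso_inv_is_iso (p X))
            (fun x y px py => Zr_hom_of_Zl_hom x y _ _
                                (fun X => iso_inv_pair (px X)) (fun X => iso_inv_pair (py X)))
            _ _);
    intros; apply sig_eq; reflexivity.
Defined.

Lemma Zrs_to_Zls_to_Zrs (x : ZrsCat F G) : Zls_to_Zrs (Zrs_to_Zls x) = x.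
Proof.
  apply sig_eq; destruct x as [[m s n c u] p].
  apply ZrObj_ext; intros X.
  apply (inverse_pair_uniq (iso_inv (p X)));
    [apply iso_inv_pair | apply inverse_pair_sym, iso_inv_pair].
Qed.

Lemma Zls_to_Zrs_to_Zls (x : ZlsCat F G) : Zrs_to_Zls (Zls_to_Zrs x) = x.
Proof.
  apply sig_eq; destruct x as [[m s n c u] p].
  apply ZlObj_ext; intros X.
  apply (inverse_pair_uniq (iso_inv (p X)));
    [apply iso_inv_pair | apply inverse_pair_sym, iso_inv_pair].
Qed.

Lemma Zrs_iso_Zls : CatIso (ZrsCat F G) (ZlsCat F G).
Proof.
  apply (CatIso_of_faithful
           (functor_compose (Zr_forget F G) (FullSub_incl _ _))
           (functor_compose (Zl_forget F G) (FullSub_incl _ _))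
           Zrs_to_Zls Zls_to_Zrs Zrs_to_Zls_to_Zrs Zls_to_Zrs_to_Zls).
  - apply faithful_compose; [apply Zr_forget_faithful | apply FullSub_incl_faithful].
  - apply faithful_compose; [apply Zl_forget_faithful | apply FullSub_incl_faithful].
  - intros; apply hcast_self.
  - intros; apply hcast_self.
Qed.

End StrongCentralizers.

Theorem proposition3p6 (C D : MonCat) (F G : LaxMonFun C D) :
  CatIso (ZlCat F G) (ColaxCat (DelF F) (DelF G)) /\
  CatIso (ZlsCat F G) (PseudoCat (DelF F) (DelF G)) /\
  CatIso (ZrCat F G) (LaxCat (DelF F) (DelF G)) /\
  CatIso (ZrsCat F G) (PseudoCat (DelF F) (DelF G)).
Proof.
  split; [apply Zl_iso_colax |].
  split; [apply Zls_iso_pseudo |].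
  split; [apply Zr_iso_lax |].
  exact (CatIso_trans (Zrs_iso_Zls F G) (Zls_iso_pseudo F G)).
Qed.
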